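(* Let $p$ be a prime number. Define integers $x_0,\ldots,x_{4p-1}$ by $x_k=kp+\left(\tfrac{k(k+1)}{2}\bmod p\right)$ and $x_{k+2p}=x_k+p$ for $k=0,\ldots,2p-1$. Then $\{x_i-x_j\mid i,j=0,\ldots,4p-1\}\supseteq\{x\in\mathbb{Z}\mid |x|<p^2\}$.
   Context: $a\bmod p$ denotes the remainder of $a$ in $\{0,\ldots,p-1\}$. *)

From Stdlib Require Import ZArith Znumtheory.
Open Scope Z_scope.

Definition xbase (p k : Z) : Z := k * p + (k * (k + 1) / 2) mod p.

Definition xseq (p k : Z) : Z :=
  if k <? 2 * p then xbase p k else xbase p (k - 2 * p) + p.

From Stdlib Require Import ZArith Znumtheory Lia.
Open Scope Z_scope.

(* Write T(k) = k(k+1)/2, so that x_k = kp + (T(k) mod p).  Since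
   T(j+d) - T(j) = dj + T(d) and d is invertible mod p for 1 <= d < p, some
   0 <= j < p makes T(j+d) - T(j) congruent to any given 0 <= b < p.  The
   residues of T(j+d) and T(j) then differ by b or b - p, so x_{j+d} - x_j is
   dp + b or (d-1)p + b; shifting one index by 2p adds or subtracts p, hence
   both dp + b and (d-1)p + b are differences.  These cover every ap + b with
   0 <= a, b < p, i.e. [0, p^2), and negating swaps i and j. *)

Definition tri (k : Z) : Z := k * (k + 1) / 2.

Lemma two_mul_tri (k : Z) : 2 * tri k = k * (k + 1).
Proof.
  unfold tri; destruct (Z.Even_or_Odd k) as [[m ->] | [m ->]].
  - replace (2 * m * (2 * m + 1)) with (m * (2 * m + 1) * 2) by ring.
    rewrite Z.div_mul by lia; ring.
  - replace ((2 * m + 1) * (2 * m + 1 + 1)) with ((2 * m + 1) * (m + 1) * 2) by ring.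
    rewrite Z.div_mul by lia; ring.
Qed.

Lemma tri_add (j d : Z) : tri (j + d) = tri j + d * j + tri d.
Proof.
  pose proof (two_mul_tri (j + d)); pose proof (two_mul_tri j);
    pose proof (two_mul_tri d).
  nia.
Qed.

Lemma linear_congruence_solvable (d e p : Z) :
  0 < p -> rel_prime d p -> exists j, 0 <= j < p /\ (d * j) mod p = e mod p.
Proof.
  intros p_pos d_coprime.
  destruct (rel_prime_bezout _ _ d_coprime) as [u v bezout].
  exists ((u * e) mod p); split; [apply Z.mod_pos_bound; lia |].
  rewrite Z.mul_mod_idemp_r by lia.
  replace (d * (u * e)) with ((u * d + v * p) * e + - (v * e) * p) by ring.
  rewrite bezout, Z.mul_1_l.
  now rewrite Z.mod_add by lia.
Qed.

Lemma mod_sub_mod_cases (a a' b p : Z) :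
  0 < p -> 0 <= b < p -> (a - a') mod p = b ->
  a mod p - a' mod p = b \/ a mod p - a' mod p = b - p.
Proof.
  intros p_pos b_range; rewrite Zminus_mod.
  pose proof (Z.mod_pos_bound a p p_pos); pose proof (Z.mod_pos_bound a' p p_pos).
  set (s := a mod p - a' mod p); intros s_mod.
  pose proof (Z.div_mod s p ltac:(lia)) as s_div.
  rewrite s_mod in s_div.
  assert (s / p = 0 \/ s / p = -1) as [q0 | q1] by nia.
  - left; rewrite q0 in s_div; lia.
  - right; rewrite q1 in s_div; lia.
Qed.

Lemma tri_sub_mod_surj (p d b : Z) :
  prime p -> 1 <= d < p -> 0 <= b < p ->
  exists j, 0 <= j < p /\ (tri (j + d) - tri j) mod p = b.
Proof.
  intros p_prime d_range b_range.
  pose proof (prime_ge_2 p p_prime).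
  destruct (linear_congruence_solvable d (b - tri d) p)
    as [j [j_range dj_mod]]; [lia | now apply rel_prime_le_prime |].
  exists j; split; [exact j_range |].
  replace (tri (j + d) - tri j) with (d * j + tri d) by (rewrite tri_add; ring).
  rewrite <- Z.add_mod_idemp_l, dj_mod, Z.add_mod_idemp_l by lia.
  replace (b - tri d + tri d) with b by ring.
  now apply Z.mod_small.
Qed.

Section Differences.

Variable p : Z.

Definition is_xdiff (x : Z) : Prop :=
  exists i j : Z, 0 <= i < 4 * p /\ 0 <= j < 4 * p /\ x = xseq p i - xseq p j.

Lemma xseq_lo (k : Z) : 0 <= k < 2 * p -> xseq p k = xbase p k.
Proof. intro; unfold xseq; now rewrite (proj2 (Z.ltb_lt _ _)) by lia. Qed.

Lemma xseq_hi (k : Z) : 0 <= k < 2 * p -> xseq p (k + 2 * p) = xbase p k + p.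
Proof.
  intro; unfold xseq; rewrite (proj2 (Z.ltb_ge _ _)) by lia.
  now replace (k + 2 * p - 2 * p) with k by ring.
Qed.

Lemma xbase_add_sub (j d : Z) :
  xbase p (j + d) - xbase p j = d * p + (tri (j + d) mod p - tri j mod p).
Proof. unfold xbase; fold (tri (j + d)) (tri j); ring. Qed.

Lemma is_xdiff_xbase (i j s : Z) :
  0 <= i < 2 * p -> 0 <= j < 2 * p -> -1 <= s <= 1 ->
  is_xdiff (xbase p i - xbase p j + s * p).
Proof.
  intros i_range j_range s_range.
  assert (s = -1 \/ s = 0 \/ s = 1) as [-> | [-> | ->]] by lia.
  - exists i, (j + 2 * p); rewrite xseq_lo, xseq_hi by lia; lia.
  - exists i, j; rewrite !xseq_lo by lia; lia.
  - exists (i + 2 * p), j; rewrite xseq_hi, xseq_lo by lia; lia.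
Qed.

Hypothesis p_prime : prime p.

Lemma is_xdiff_digits (d b : Z) :
  1 <= d < p -> 0 <= b < p -> is_xdiff (d * p + b) /\ is_xdiff ((d - 1) * p + b).
Proof.
  intros d_range b_range.
  pose proof (prime_ge_2 p p_prime).
  destruct (tri_sub_mod_surj p d b p_prime d_range b_range) as [j [j_range tri_mod]].
  assert (shifted_xdiff : forall s, -1 <= s <= 1 ->
            is_xdiff (d * p + (tri (j + d) mod p - tri j mod p) + s * p)).
  { intros s s_range; rewrite <- xbase_add_sub; apply is_xdiff_xbase; lia. }
  destruct (mod_sub_mod_cases _ _ b p ltac:(lia) b_range tri_mod) as [residues | residues];
    rewrite residues in shifted_xdiff.
  - split.
    + replace (d * p + b) with (d * p + b + 0 * p) by ring; apply shifted_xdiff; lia.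
    + replace ((d - 1) * p + b) with (d * p + b + -1 * p) by ring; apply shifted_xdiff; lia.
  - split.
    + replace (d * p + b) with (d * p + (b - p) + 1 * p) by ring; apply shifted_xdiff; lia.
    + replace ((d - 1) * p + b) with (d * p + (b - p) + 0 * p) by ring; apply shifted_xdiff; lia.
Qed.

Lemma is_xdiff_nonneg (x : Z) : 0 <= x < p ^ 2 -> is_xdiff x.
Proof.
  intro x_range; pose proof (prime_ge_2 p p_prime).
  assert (digit_lo : 0 <= x mod p < p) by (apply Z.mod_pos_bound; lia).
  assert (digit_hi : 0 <= x / p < p).
  { split; [apply Z.div_pos | apply Z.div_lt_upper_bound]; nia. }
  rewrite (Z.div_mod x p), Z.mul_comm by lia.
  destruct (Z.eq_dec (x / p) 0) as [-> | nonzero].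
  - exact (proj2 (is_xdiff_digits 1 (x mod p) ltac:(lia) digit_lo)).
  - exact (proj1 (is_xdiff_digits (x / p) (x mod p) ltac:(lia) digit_lo)).
Qed.

End Differences.

Lemma is_xdiff_opp (p x : Z) : is_xdiff p x -> is_xdiff p (- x).
Proof. intros [i [j [i_range [j_range ->]]]]; exists j, i; lia. Qed.

Theorem theorem8 (p : Z) (hp : prime p) :
  forall x : Z, Z.abs x < p ^ 2 ->
    exists i j : Z, 0 <= i < 4 * p /\ 0 <= j < 4 * p /\ x = xseq p i - xseq p j.
Proof.
  intros x x_small.
  destruct (Z_le_gt_dec 0 x) as [x_nonneg | x_neg].
  - apply is_xdiff_nonneg; [exact hp | lia].
  - rewrite <- (Z.opp_involutive x).
    apply is_xdiff_opp, is_xdiff_nonneg; [exact hp | lia].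
Qed.
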